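(* Let $\beta$ be a braid on $b$ strands, let $2\le a<b$, let $1\le i\le b-a+1$, and let $$\alpha^{\pm}=(\sigma_i^{\pm1}\sigma_{i+1}^{\pm1}\cdots\sigma_{i+a-2}^{\pm1})^{a}$$ (a positive, respectively negative, full twist on the $a$ strands in positions $i,\dots,i+a-1$). For $m\ge 1$ let $L^m_{\pm}$ denote the transverse link given by the closure of $\beta(\alpha^{\pm})^m$. Then (for each choice of sign) there is some $N$ such that for all $m>N$, $\psi(L^m_{\pm})=0$ if and only if $\psi(L^{m+1}_{\pm})=0$. Similarly, for all such $m$, $\psi'(L^m_{\pm})=0$ if and only if $\psi'(L^{m+1}_{\pm})=0$.
   Context: $B_b$ is the Artin braid group with standard generators $\sigma_1,\dots,\sigma_{b-1}$; closures of braids are transverse links in the standard contact $S^3$. Khovanov complex conventions: for an oriented diagram with $n_\pm$ positive/negative crossings, generators are Kauffman states (a $0$- or $1$-resolution at each crossing) with each resulting circle labelled $v_+$ or $v_-$; homological grading $i=r-n_-$ ($r$ = number of $1$-resolutions), quantum grading $j=p+i+n_+-n_-$ where $p$ = (number of $v_+$) − (number of $v_-$); the differential uses the standard merge/split maps. $\psi(\hat\beta)$ (Plamenevskaya's invariant) is the Khovanov homology class of the generator labelling every circle $v_-$ in the oriented resolution of the closed braid diagram (the $0$-resolution at positive crossings, the $1$-resolution at negative crossings). $\psi'$ is the analogous class in reduced Khovanov homology over $\mathbb{Z}/2\mathbb{Z}$ (quotient by generators with $v_-$ on the circle through a marked point), given by labelling the marked circle $v_+$ and all other circles $v_-$ in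 the oriented resolution. *)

From mathcomp Require Import all_boot all_order all_algebra.
Set Implicit Arguments. Unset Strict Implicit. Unset Printing Implicit Defensive.
Import GRing.Theory Num.Theory.
Local Open Scope ring_scope.

(* A braid word: a sequence of letters (k, eps) standing for sigma_k^{+1}
   if eps = true and sigma_k^{-1} if eps = false (k is 1-based). *)
Definition braid_word := seq (nat * bool).

Definition wf_word (b : nat) (w : braid_word) : bool :=
  all (fun l => (0 < l.1)%N && (l.1 < b)%N) w.

Definition letter (w : braid_word) (t : nat) : nat * bool := nth (0%N, true) w t.

Definition full_twist (a i : nat) (e : bool) : braid_word :=
  flatten (nseq a [seq (j, e) | j <- iota i a.-1]).

Definition twisted (beta : braid_word) (a i : nat) (e : bool) (m : nat) : braid_word :=
  beta ++ flatten (nseq m (full_twist a i e)).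

Definition nneg (w : braid_word) : nat := count (fun l => ~~ l.2) w.

(* Kauffman states: a 0/1 choice at each crossing (true = 1-resolution). *)
Definition state (w : braid_word) := {ffun 'I_(size w) -> bool}.

Definition st (w : braid_word) (s : state w) (t : nat) : bool :=
  if insub t is Some c then s c else false.

(* The resolution at crossing t is the vertical (= oriented) smoothing iff it is
   the 0-resolution of a positive crossing or the 1-resolution of a negative one. *)
Definition vert (w : braid_word) (s : state w) (t : nat) : bool :=
  st s t == ~~ (letter w t).2.

(* Arcs of the closed braid diagram: node (t, p), 0 <= t <= size w, p < b, is the
   piece of the strand in position p (0-based) between crossing t-1 and crossing t;
   level size w is glued to level 0 by the braid closure.  Crossing t involving
   sigma_k acts on positions k-1 and k. *)
Definition bedge (w : braid_word) (s : state w) (u v : nat * nat) : bool :=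
  let: (t, p) := u in let: (t', q) := v in
  [|| (t == size w) && (t' == 0%N) && (p == q),
      [&& (t < size w)%N, t' == t.+1, p == q &
          ((p != (letter w t).1.-1) && (p != (letter w t).1)) || vert s t],
      [&& (t < size w)%N, t' == t, p == (letter w t).1.-1, q == (letter w t).1
          & ~~ vert s t] |
      [&& (0 < t)%N, (t.-1 < size w)%N, t' == t, p == (letter w t.-1).1.-1,
          q == (letter w t.-1).1 & ~~ vert s t.-1] ].

Definition node (b : nat) (w : braid_word) := ('I_(size w).+1 * 'I_b)%type.

Definition nval (b : nat) (w : braid_word) (z : node b w) : nat * nat :=
  (nat_of_ord z.1, nat_of_ord z.2).

Definition edge (b : nat) (w : braid_word) (s : state w) : rel (node b w) :=
  fun u v => bedge s (nval u) (nval v) || bedge s (nval v) (nval u).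

Definition same_circle (b : nat) (w : braid_word) (s : state w) : rel (node b w) :=
  connect (@edge b w s).

(* generators: a state together with a labelling of arcs constant on circles
   (true = v_+, false = v_-) *)
Definition gen (b : nat) (w : braid_word) :=
  (state w * {ffun node b w -> bool})%type.

Definition valid (b : nat) (w : braid_word) (x : gen b w) : bool :=
  [forall u, forall v, same_circle x.1 u v ==> (x.2 u == x.2 v)].

Definition rdeg (b : nat) (w : braid_word) (x : gen b w) : nat := #|[set c | x.1 c]|.

Definition in_circ (b : nat) (w : braid_word) (s : state w) (P : pred (node b w))
  (z : node b w) : bool := [exists u, P u && same_circle s u z].
Definition lab (b : nat) (w : braid_word) (f : {ffun node b w -> bool})
  (P : pred (node b w)) : bool := [exists u, P u && f u].

(* the arcs (c, k-1) and (c+1, k) at crossing c = sigma_k: the (at most two)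
   circles meeting the crossing are the circles through these two arcs *)
Definition arcU (b : nat) (w : braid_word) (c : nat) : pred (node b w) :=
  fun z => (nval z == (c, (letter w c).1.-1)).
Definition arcV (b : nat) (w : braid_word) (c : nat) : pred (node b w) :=
  fun z => (nval z == (c.+1, (letter w c).1)).

(* m(v+ (x) v+) = v+, m(v+ (x) v-) = m(v- (x) v+) = v-, m(v- (x) v-) = 0 *)
Definition merge_coef (l1 l2 out : bool) : bool :=
  if l1 && l2 then out else if l1 || l2 then ~~ out else false.
(* Delta(v+) = v+ (x) v- + v- (x) v+,  Delta(v-) = v- (x) v- *)
Definition split_coef (l o1 o2 : bool) : bool :=
  if l then o1 != o2 else ~~ o1 && ~~ o2.

Definition local_coef (b : nat) (w : braid_word) (c : nat) (x y : gen b w) : bool :=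
  let U := @arcU b w c in let V := @arcV b w c in
  let conn (s : state w) := [exists u, exists v, [&& U u, V v & same_circle s u v]] in
  let agree := [forall z, (~~ in_circ x.1 U z && ~~ in_circ x.1 V z) ==> (x.2 z == y.2 z)] in
  if ~~ conn x.1 && conn y.1 then
    agree && merge_coef (lab x.2 U) (lab x.2 V) (lab y.2 U)
  else if conn x.1 && ~~ conn y.1 then
    agree && split_coef (lab x.2 U) (lab y.2 U) (lab y.2 V)
  else false.

(* the matrix of the Khovanov differential: coefficient of y in d x *)
Definition kh_d (b : nat) (w : braid_word) (x y : gen b w) : int :=
  if valid x && valid y then
    \sum_(c : 'I_(size w) | ~~ x.1 c &&
            (y.1 == [ffun j => if j == c then true else x.1 j]))
       (-1) ^+ #|[set j : 'I_(size w) | (j < c)%N && x.1 j]| * (local_coef (val c) x y)%:Z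
  else 0.

Definition or_state (w : braid_word) : state w := [ffun c => ~~ (letter w (val c)).2].

Definition psi_gen (b : nat) (w : braid_word) : gen b w := (or_state w, [ffun _ => false]).

(* psi(w) = 0 in Kh(closure of w; Z): psi_gen is the image under d of an integral
   chain of homological degree -1 (i.e. r = n_- - 1) *)
Definition psi_vanishes (b : nat) (w : braid_word) : Prop :=
  exists cf : {ffun gen b w -> int},
    (forall x, cf x != 0 -> valid x && ((rdeg x).+1 == nneg w)) /\
    (forall y, \sum_x cf x * kh_d x y = (y == psi_gen b w)%:Z).

Definition marked (b : nat) (w : braid_word) (p : nat) : pred (node b w) :=
  fun z => nval z == (0%N, p).

Definition psi'_gen (b : nat) (w : braid_word) (p : nat) : gen b w :=
  (or_state w, [ffun z => in_circ (or_state w) (@marked b w p) z]).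

(* psi'(w) = 0 in reduced Khovanov homology over Z/2 (quotient complex by the
   generators with v_- on the marked circle): psi'_gen is, modulo that subcomplex,
   the differential of a Z/2-chain of degree -1 spanned by generators with v_+ on
   the marked circle *)
Definition psi'_vanishes (b : nat) (w : braid_word) (p : nat) : Prop :=
  exists cf : {ffun gen b w -> 'F_2},
    (forall x, cf x != 0 ->
       [&& valid x, (rdeg x).+1 == nneg w & lab x.2 (@marked b w p)]) /\
    (forall y, valid y -> lab y.2 (@marked b w p) ->
       \sum_x cf x * (kh_d x y)%:~R = (y == psi'_gen b w p)%:R).

From mathcomp Require Import all_boot all_order all_algebra.
From mathcomp Require Import zify.
From Stdlib Require Import Classical_Prop.
Set Implicit Arguments. Unset Strict Implicit. Unset Printing Implicit Defensive.
Import GRing.Theory Num.Theory.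

(* Let w' be w followed by one more crossing.  The generators of w' whose state
   is the oriented resolution at the new crossing are in bijection with the
   generators of w, compatibly with circles, gradings, the differential, psi and
   psi': resolving that crossing in the oriented way just adds a vertical piece
   of strand.  Since the differential only turns 0-resolutions into
   1-resolutions, these generators span a subcomplex when the new crossing is
   negative (oriented resolution = 1) and a quotient complex when it is
   positive.  So a chain bounding psi(w) lifts to one bounding psi(w sigma^-1),
   and a chain bounding psi(w sigma) restricts to one bounding psi(w); likewise
   for psi'.  Along beta alpha^m the vanishing of psi and psi' is therefore
   monotone in m, hence eventually constant. *)

Definition eventually (P : nat -> Prop) := exists N, forall m, (N < m)%N -> P m.

Lemma eventually_and (P Q : nat -> Prop) :
  eventually P -> eventually Q -> eventually (fun m => P m /\ Q m).
Proof.
move=> [M HP] [N HQ]; exists (maxn M N) => m; rewrite gtn_max => /andP[hM hN].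
by split; [apply: HP | apply: HQ].
Qed.

Lemma eventually_forall_ltn n (P : nat -> nat -> Prop) :
  (forall p, (p < n)%N -> eventually (P p)) ->
  eventually (fun m => forall p, (p < n)%N -> P p m).
Proof.
elim: n => [|n IH] H; first by exists 0%N.
have [N HN] := eventually_and (IH (fun p hp => H p (ltnW hp))) (H n (ltnSn n)).
exists N => m /HN[Hlt Hn] p; rewrite ltnS leq_eqVlt => /predU1P[-> // | ].
exact: Hlt.
Qed.

Lemma eventually_stable_decr (P : nat -> Prop) :
  (forall m, P m.+1 -> P m) -> eventually (fun m => P m <-> P m.+1).
Proof.
move=> decr; case: (classic (exists m0, ~ P m0)) => [[m0 nPm0] | always].
  have nP k : (m0 <= k)%N -> ~ P k.
    move/subnKC <-; elim: (k - m0)%N => [|d IHd]; first by rewrite addn0.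
    by rewrite addnS => /decr.
  exists m0 => m /ltnW m0m; split=> [/(nP m m0m) // | ]; exact: decr.
by exists 0%N => m _; split=> _; apply: NNPP => nPm; apply: always; eexists; exact: nPm.
Qed.

Lemma eventually_stable_incr (P : nat -> Prop) :
  (forall m, P m -> P m.+1) -> eventually (fun m => P m <-> P m.+1).
Proof.
move=> incr; have [N HN] := @eventually_stable_decr (fun m => ~ P m)
  (fun m nPm1 Pm => nPm1 (incr m Pm)).
exists N => m /HN[nP nP1]; split; first exact: incr.
by move=> Pm1; apply: NNPP => nPm; exact: nP nPm Pm1.
Qed.

Lemma homo_connect (T U : finType) (e : rel T) (e' : rel U) (f : T -> U) :
  {homo f : x y / e x y >-> connect e' x y} ->
  {homo f : x y / connect e x y >-> connect e' x y}.
Proof.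
move=> He x y /connectP[p pth ->].
elim: p x pth => [|z p IH] x /= => [_ | /andP[exz /IH]]; first exact: connect0.
exact: connect_trans (He _ _ exz).
Qed.

Lemma card_ord_pred n (P : pred nat) :
  #|[set j : 'I_n | P j]| = count P (iota 0 n).
Proof.
rewrite -val_enum_ord count_map cardsE cardE /enum_mem size_filter.
by rewrite (@eq_filter _ _ predT) // filter_predT.
Qed.

Section Diagram.

Variables (b : nat) (w : braid_word).

Lemma stE (s : state w) (c : 'I_(size w)) : st s c = s c.
Proof. by rewrite /st valK. Qed.

Lemma st_out (s : state w) t : (size w <= t)%N -> st s t = false.
Proof. by move=> h; rewrite /st insubN // -leqNgt. Qed.

Lemma edge_sym (s : state w) : symmetric (@edge b w s).
Proof. by move=> u v; rewrite /edge orbC. Qed.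

Lemma same_circle_sym (s : state w) : symmetric (@same_circle b w s).
Proof. exact/sym_connect_sym/edge_sym. Qed.

Lemma nval_inj : injective (@nval b w).
Proof. by move=> [t p] [t' q] [/val_inj -> /val_inj ->]. Qed.

Definition raised_at (s s' : state w) (c : nat) : bool :=
  [forall j : 'I_(size w), st s' j == (val j == c) || st s j].

Lemma raised_atP s s' c :
  reflect (forall t, (t < size w)%N -> st s' t = (t == c) || st s t)
          (raised_at s s' c).
Proof.
apply: (iffP forallP) => h; last by move=> j; rewrite h.
by move=> t ht; have /eqP := h (Ordinal ht).
Qed.

Definition kh_d_term (x y : gen b w) (c : nat) : int :=
  if ~~ st x.1 c && raised_at x.1 y.1 c then
    ((-1) ^+ count (st x.1) (iota 0 c) * (local_coef c x y)%:Z)%R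
  else 0%R.

Lemma kh_dE (x y : gen b w) :
  kh_d x y = if valid x && valid y then (\sum_(0 <= c < size w) kh_d_term x y c)%R
             else 0%R.
Proof.
rewrite /kh_d; case: (valid x && valid y) => //.
rewrite big_mkcond big_mkord; apply: eq_bigr => c _; rewrite /kh_d_term stE.
have -> : (y.1 == [ffun j => if j == c then true else x.1 j]) = raised_at x.1 y.1 c.
  apply/eqP/raised_atP => [-> t ht | h].
    by rewrite -[t]/(nat_of_ord (Ordinal ht)) !stE ffunE -val_eqE /=; case: (t == val c).
  by apply/ffunP => j; rewrite ffunE -(stE y.1) h // stE -val_eqE; case: (val j == val c).
congr (if _ then (_ ^+ _ * _)%R else _).
rewrite (@eq_card _ _ [set j : 'I_(size w) | (j < c)%N && st x.1 j]); last first.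
  by move=> j; rewrite !inE stE.
rewrite (card_ord_pred _ (fun t => (t < c)%N && st x.1 t)).
have -> : iota 0 (size w) = iota 0 c ++ iota c (size w - c).
  by rewrite -iotaD subnKC // ltnW.
rewrite count_cat.
rewrite (@eq_in_count _ _ pred0 (iota c _)) ?count_pred0 ?addn0; last first.
  by move=> t; rewrite mem_iota /= => /andP[/leq_gtF ->].
by apply: eq_in_count => t; rewrite mem_iota => /andP[_ ->].
Qed.

Lemma kh_d_neq0 (x y : gen b w) : kh_d x y != 0%R ->
  [/\ valid x, valid y & forall t, st x.1 t -> st y.1 t].
Proof.
rewrite kh_dE; case: ifP => [/andP[vx vy] | _]; last by rewrite eqxx.
rewrite big_nat; case: (pickP (fun c : 'I_(size w) => kh_d_term x y c != 0%R)).
  move=> c; rewrite /kh_d_term; case: ifP => [/andP[_ /raised_atP hc] _ _ | _];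
    last by rewrite eqxx.
  split=> // t xt; case: (ltnP t (size w)) => ht; first by rewrite hc // xt orbT.
  by rewrite st_out in xt.
move=> none; rewrite big1 ?eqxx // => c /andP[_ hc].
by have /negbFE/eqP := none (Ordinal hc).
Qed.

End Diagram.

Definition kh_dchain (R : pzRingType) b w (cf : {ffun gen b w -> R}) (y : gen b w) : R :=
  (\sum_x cf x * (kh_d x y)%:~R)%R.

Lemma psi_vanishesE b w : psi_vanishes b w <->
  exists cf : {ffun gen b w -> int},
    (forall x, cf x != 0%R -> valid x && ((rdeg x).+1 == nneg w)) /\
    (forall y, kh_dchain cf y = ((y == psi_gen b w)%:Z)%R).
Proof.
have chainE (cf : {ffun gen b w -> int}) y :
    kh_dchain cf y = (\sum_x cf x * kh_d x y)%R.
  by apply: eq_bigr => x _; rewrite intz.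
by split=> [] [cf [supp dcf]]; exists cf; split=> // y; rewrite ?chainE // -chainE.
Qed.

Section AppendCrossing.

Variables (b : nat) (w : braid_word) (l : nat * bool).

Local Notation wl := (rcons w l).

Lemma size_wl : size wl = (size w).+1.
Proof. exact: size_rcons. Qed.

Lemma letter_rcons t : (t < size w)%N -> letter wl t = letter w t.
Proof. by move=> h; rewrite /letter nth_rcons h. Qed.

Lemma letter_rcons_last : letter wl (size w) = l.
Proof. by rewrite /letter nth_rcons ltnn eqxx. Qed.

Lemma level_wl (u : node b wl) : (u.1 <= (size w).+1)%N.
Proof. by rewrite -ltnS -size_wl ltn_ord. Qed.

Definition lift_node (z : node b w) : node b wl := (inord z.1, z.2).

(* Level (size w).+1 of wl is the copy of level 0 made by the closure; it is
   sent to level size w, which the vertical strand of the new crossing joins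
   to it. *)
Definition proj_node (z : node b wl) : node b w := (inord (minn z.1 (size w)), z.2).

Lemma nval_lift_node z : nval (lift_node z) = nval z.
Proof. by rewrite /nval /= inordK // size_wl ltnS ltnW. Qed.

Lemma nval_proj_node z : nval (proj_node z) = (minn z.1 (size w), z.2 : nat).
Proof. by rewrite /nval /= inordK // ltnS geq_minr. Qed.

Lemma lift_nodeK : cancel lift_node proj_node.
Proof.
move=> [t p]; congr (_, _); apply: val_inj => /=; have ht := ltn_ord t.
by rewrite inordK ?ltnS ?geq_minr // inordK ?size_wl 1?ltnW //; apply/minn_idPl.
Qed.

Lemma proj_nodeK (z : node b wl) : (z.1 <= size w)%N -> lift_node (proj_node z) = z.
Proof.
case: z => [t p] /= h; congr (_, _); apply: val_inj => /=.
rewrite (minn_idPl h) !inordK ?ltnS //; apply: leq_trans h _; by rewrite size_wl.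
Qed.

Lemma forall_proj_node (P : pred (node b w)) :
  [forall u : node b wl, P (proj_node u)] = [forall u, P u].
Proof.
apply/forallP/forallP => h u; last exact: h.
by have := h (lift_node u); rewrite lift_nodeK.
Qed.

Lemma exists_lift_node (Q : pred (node b wl)) :
  (forall u, Q u -> (u.1 <= size w)%N) ->
  [exists u, Q u] = [exists u, Q (lift_node u)].
Proof.
move=> low; apply/existsP/existsP => [[u Qu] | [u Qu]]; last by exists (lift_node u).
by exists (proj_node u); rewrite proj_nodeK // low.
Qed.

Lemma level_at (u : node b wl) (A : nat * nat) :
  nval u == A -> (A.1 <= size w)%N -> (u.1 <= size w)%N.
Proof. by move/eqP=> uA; rewrite -[u.1 : nat]/((nval u).1) uA. Qed.

Definition lift_state (s : state w) : state wl :=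
  [ffun c : 'I_(size wl) => if (val c < size w)%N then st s (val c) else ~~ l.2].

Definition proj_state (s' : state wl) : state w := [ffun c : 'I_(size w) => st s' (val c)].

Lemma st_lift_state (s : state w) t :
  st (lift_state s) t =
  if (t < size w)%N then st s t else (t == size w) && ~~ l.2.
Proof.
case: (ltnP t (size wl)) => h.
  rewrite /st insubT /= ffunE /=; case: ltnP => // h2.
  by rewrite (_ : t == size w) //= eqn_leq h2 -ltnS -size_wl h.
rewrite st_out // (_ : (t < size w)%N = false) ?gtn_eqF //; move: h; rewrite size_wl; lia.
Qed.

Lemma st_lift_state_lt (s : state w) t : (t < size w)%N -> st (lift_state s) t = st s t.
Proof. by move=> h; rewrite st_lift_state h. Qed.

Lemma st_lift_state_last (s : state w) : st (lift_state s) (size w) = ~~ l.2.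
Proof. by rewrite st_lift_state ltnn eqxx. Qed.

Lemma st_proj_state (s' : state wl) t : (t < size w)%N -> st (proj_state s') t = st s' t.
Proof. by move=> h; rewrite /st insubT /= ffunE. Qed.

Lemma lift_stateK : cancel lift_state proj_state.
Proof.
move=> s; apply/ffunP => c; rewrite ffunE st_lift_state_lt; [exact: stE | exact: ltn_ord].
Qed.

Lemma proj_stateK (s' : state wl) :
  st s' (size w) = ~~ l.2 -> lift_state (proj_state s') = s'.
Proof.
move=> last; apply/ffunP => c; rewrite ffunE -(stE s' c).
case: ltnP => [/st_proj_state // | h].
suff -> : val c = size w by [].
by apply/eqP; rewrite eqn_leq h -ltnS -size_wl ltn_ord.
Qed.

Lemma vert_lift_state (s : state w) t :
  (t < size w)%N -> vert (lift_state s) t = vert s t.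
Proof. by move=> h; rewrite /vert st_lift_state_lt // letter_rcons. Qed.

Lemma vert_lift_state_last (s : state w) : vert (lift_state s) (size w).
Proof. by rewrite /vert st_lift_state_last letter_rcons_last. Qed.

Lemma bedge_proj (s : state w) t p t' q :
  (t <= (size w).+1)%N -> (t' <= (size w).+1)%N ->
  bedge (lift_state s) (t, p) (t', q) ->
  (minn t (size w), p) = (minn t' (size w), q) \/
  bedge s (minn t (size w), p) (minn t' (size w), q).
Proof.
move=> ht ht'; rewrite /bedge size_wl; case/or4P.
- case/andP=> /andP[/eqP-> /eqP->] /eqP->; right.
  by rewrite (minn_idPr (leqnSn _)) (minn_idPl (leq0n _)) !eqxx.
- case/and4P=> tw /eqP-> /eqP-> hc.
  case: (ltngtP t (size w)) => [tn|tn|->]; [|lia|];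
    last by left; rewrite (minn_idPr (leqnSn _)).
  right; rewrite (minn_idPl tn) tn !eqxx /=.
  by rewrite letter_rcons // vert_lift_state // in hc; rewrite hc orbT.
- case/and5P=> tw /eqP-> /eqP-> /eqP-> hv.
  case: (ltngtP t (size w)) => [tn|tn|tn]; [|lia|];
    last by rewrite tn vert_lift_state_last in hv.
  right; rewrite tn !eqxx /=.
  by rewrite letter_rcons // -vert_lift_state // hv !eqxx /= !orbT.
- case/andP=> t0 /and5P[tw /eqP-> /eqP-> /eqP-> hv].
  case: (ltngtP t.-1 (size w)) => [tn|tn|tn]; [|lia|];
    last by rewrite tn vert_lift_state_last in hv.
  have tn' : (t <= size w)%N by rewrite -(prednK t0).
  right; rewrite (minn_idPl tn') t0 tn !eqxx /=.
  by rewrite letter_rcons // -(vert_lift_state s tn) hv !eqxx /= !orbT.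
Qed.

Lemma bedge_lift (s : state w) t p t' q :
  (t <= size w)%N -> bedge s (t, p) (t', q) ->
  bedge (lift_state s) (t, p) (t', q) \/ [/\ t = size w, t' = 0%N & p = q].
Proof.
move=> ht; rewrite /bedge size_wl; case/or4P.
- by case/andP=> /andP[/eqP-> /eqP->] /eqP->; right.
- case/and4P=> tw /eqP-> /eqP-> hc; left.
  by rewrite letter_rcons // vert_lift_state // hc ltnS ltnW // !eqxx /= orbT.
- case/and5P=> tw /eqP-> /eqP-> /eqP-> hv; left.
  by rewrite letter_rcons // vert_lift_state // hv ltnS ltnW // !eqxx /= !orbT.
- case/andP=> t0 /and5P[tw /eqP-> /eqP-> /eqP-> hv]; left.
  have tw1 : (t.-1 < (size w).+1)%N by rewrite ltnS ltnW.
  rewrite [letter wl t.-1]letter_rcons // (vert_lift_state s tw) hv t0 tw1.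
  by rewrite !eqxx /= !orbT.
Qed.

Lemma edge_proj (s : state w) (u v : node b wl) :
  edge (lift_state s) u v -> connect (edge s) (proj_node u) (proj_node v).
Proof.
have directed u1 v1 : bedge (lift_state s) (nval u1) (nval v1) ->
    connect (edge s) (proj_node u1) (proj_node v1).
  case/(bedge_proj (level_wl u1) (level_wl v1)) => [E | E].
    by apply: eq_connect0; apply: nval_inj; rewrite !nval_proj_node.
  by apply: connect1; rewrite /edge !nval_proj_node E.
case/orP => [/directed // | /directed].
by rewrite (sym_connect_sym (@edge_sym b w s)).
Qed.

Lemma edge_lift (s : state w) (u v : node b w) :
  edge s u v -> connect (edge (lift_state s)) (lift_node u) (lift_node v).
Proof.
have directed (u1 v1 : node b w) : bedge s (nval u1) (nval v1) ->
    connect (edge (lift_state s)) (lift_node u1) (lift_node v1).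
  case: u1 v1 => [t p] [t' q]; rewrite /nval /=.
  case/(bedge_lift (ltn_ord t)) => [E | [E1 E2 E3]].
    by apply: connect1; rewrite /edge !nval_lift_node E.
  (* the closure edge of w becomes the new vertical strand followed by the
     closure edge of wl *)
  pose top : node b wl := (inord (size w).+1, p).
  have ntop : nval top = ((size w).+1, p : nat) by rewrite /nval /= inordK // size_wl.
  apply: (@connect_trans _ _ top); apply: connect1;
    rewrite /edge ntop !nval_lift_node /nval /= /bedge size_wl.
    by rewrite E1 ltnSn vert_lift_state_last !eqxx /= !orbT.
  by rewrite E2 E3 !eqxx.
case/orP => [/directed // | /directed].
by rewrite (sym_connect_sym (@edge_sym b _ (lift_state s))).
Qed.

Lemma same_circle_lift_proj (s : state w) (u : node b wl) :
  same_circle (lift_state s) (lift_node (proj_node u)) u.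
Proof.
have := level_wl u; rewrite leq_eqVlt ltnS => /predU1P[top | le]; last first.
  by rewrite proj_nodeK //; apply: connect0.
apply: connect1; rewrite /edge nval_lift_node nval_proj_node /nval /= top.
rewrite (minn_idPr (leqnSn _)) /bedge (_ : (size w < size wl)%N) ?size_wl //.
by rewrite vert_lift_state_last !eqxx /= !orbT.
Qed.

Lemma same_circle_proj (s : state w) (u v : node b wl) :
  same_circle s (proj_node u) (proj_node v) = same_circle (lift_state s) u v.
Proof.
apply/idP/idP => [|]; last by apply: homo_connect => x y; apply: edge_proj.
move/(homo_connect (@edge_lift s)) => h.
apply: connect_trans (connect_trans _ h) (same_circle_lift_proj _ _).
by rewrite -/(same_circle _ _ _) same_circle_sym same_circle_lift_proj.
Qed.

Lemma same_circle_lift (s : state w) (u v : node b w) :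
  same_circle (lift_state s) (lift_node u) (lift_node v) = same_circle s u v.
Proof. by rewrite -same_circle_proj !lift_nodeK. Qed.

Lemma in_circ_lift (s : state w) (A : nat * nat) (z : node b wl) :
  (A.1 <= size w)%N ->
  in_circ (lift_state s) (fun u => nval u == A) z =
  in_circ s (fun u => nval u == A) (proj_node z).
Proof.
move=> hA; rewrite /in_circ exists_lift_node => [|u /andP[uA _]];
  last exact: level_at uA hA.
by apply: eq_existsb => u; rewrite nval_lift_node -same_circle_proj lift_nodeK.
Qed.

Lemma lab_lift (f : {ffun node b w -> bool}) (A : nat * nat) :
  (A.1 <= size w)%N ->
  lab [ffun z : node b wl => f (proj_node z)] (fun u => nval u == A) =
  lab f (fun u => nval u == A).
Proof.
move=> hA; rewrite /lab exists_lift_node => [|u /andP[uA _]];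
  last exact: level_at uA hA.
by apply: eq_existsb => u; rewrite nval_lift_node ffunE lift_nodeK.
Qed.

Lemma joined_lift (s : state w) (A B : nat * nat) :
  (A.1 <= size w)%N -> (B.1 <= size w)%N ->
  [exists u : node b wl, exists v : node b wl,
     [&& nval u == A, nval v == B & same_circle (lift_state s) u v]] =
  [exists u : node b w, exists v : node b w,
     [&& nval u == A, nval v == B & same_circle s u v]].
Proof.
move=> hA hB; rewrite exists_lift_node => [|u /existsP[v /andP[uA _]]];
  last exact: level_at uA hA.
apply: eq_existsb => u; rewrite exists_lift_node => [|v /and3P[_ vB _]];
  last exact: level_at vB hB.
by apply: eq_existsb => v; rewrite !nval_lift_node same_circle_lift.
Qed.

Definition lift_gen (x : gen b w) : gen b wl :=
  (lift_state x.1, [ffun z => x.2 (proj_node z)]).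

Definition proj_gen (x' : gen b wl) : gen b w :=
  (proj_state x'.1, [ffun z => x'.2 (lift_node z)]).

Definition lifted (x' : gen b wl) : bool := lift_gen (proj_gen x') == x'.

Lemma lift_genK : cancel lift_gen proj_gen.
Proof.
case=> s f; rewrite /proj_gen /lift_gen /= lift_stateK; congr (_, _).
by apply/ffunP => z; rewrite !ffunE lift_nodeK.
Qed.

Lemma lift_gen_inj : injective lift_gen.
Proof. exact: can_inj lift_genK. Qed.

Lemma lifted_lift_gen x : lifted (lift_gen x).
Proof. by rewrite /lifted lift_genK. Qed.

Lemma liftedP x' : reflect (exists x, x' = lift_gen x) (lifted x').
Proof.
apply: (iffP eqP) => [<- | [x ->]]; first by exists (proj_gen x').
by rewrite lift_genK.
Qed.

Lemma valid_lift_gen x : valid (lift_gen x) = valid x.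
Proof.
rewrite /valid -[in RHS]forall_proj_node; apply: eq_forallb => u.
rewrite -[in RHS]forall_proj_node; apply: eq_forallb => v.
by rewrite /= -same_circle_proj !ffunE.
Qed.

Lemma lifted_oriented x' :
  valid x' -> st x'.1 (size w) = ~~ l.2 -> lifted x'.
Proof.
case: x' => s f /= V last; apply/eqP; rewrite /proj_gen /lift_gen /= proj_stateK //.
congr (_, _); apply/ffunP => z; rewrite !ffunE.
have /implyP := forallP (forallP V (lift_node (proj_node z))) z.
by rewrite /= -{1}(proj_stateK last) same_circle_lift_proj => /(_ isT) /eqP.
Qed.

Lemma rdeg_lift_gen x : rdeg (lift_gen x) = (rdeg x + ~~ l.2)%N.
Proof.
rewrite /rdeg /=.
rewrite (eq_card (B := [set j : 'I_(size wl) | st (lift_state x.1) j])); last first.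
  by move=> j; rewrite !inE stE.
rewrite (eq_card (A := [set c | x.1 c]) (B := [set j : 'I_(size w) | st x.1 j]));
  last by move=> j; rewrite !inE stE.
rewrite (card_ord_pred _ (st _)) (card_ord_pred _ (st _)).
have -> : iota 0 (size wl) = iota 0 (size w) ++ [:: size w].
  by rewrite size_wl -addn1 iotaD.
rewrite count_cat /= st_lift_state_last addn0.
congr (_ + _)%N; apply: eq_in_count => t; rewrite mem_iota => /andP[_ ht].
exact: st_lift_state_lt.
Qed.

Lemma nneg_rcons : nneg wl = (nneg w + ~~ l.2)%N.
Proof. by rewrite /nneg -cats1 count_cat /= addn0. Qed.

Lemma degree_lift_gen x :
  ((rdeg (lift_gen x)).+1 == nneg wl) = ((rdeg x).+1 == nneg w).
Proof. by rewrite rdeg_lift_gen nneg_rcons -addSn eqn_add2r. Qed.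

Lemma or_state_rcons : or_state wl = lift_state (or_state w).
Proof.
apply/ffunP => c; rewrite !ffunE; case: ltnP => h.
  by rewrite letter_rcons // /st insubT /= ffunE.
suff -> : val c = size w by rewrite letter_rcons_last.
by apply/eqP; rewrite eqn_leq h -ltnS -size_wl ltn_ord.
Qed.

Lemma psi_gen_rcons : psi_gen b wl = lift_gen (psi_gen b w).
Proof.
rewrite /psi_gen /lift_gen /= or_state_rcons; congr (_, _).
by apply/ffunP => z; rewrite !ffunE.
Qed.

Lemma psi'_gen_rcons p : psi'_gen b wl p = lift_gen (psi'_gen b w p).
Proof.
rewrite /psi'_gen /lift_gen /= or_state_rcons; congr (_, _).
by apply/ffunP => z; rewrite !ffunE /marked in_circ_lift.
Qed.

Lemma lab_marked_lift_gen x p :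
  lab (lift_gen x).2 (@marked b wl p) = lab x.2 (@marked b w p).
Proof. exact: lab_lift. Qed.

Lemma local_coef_lift_gen c (x y : gen b w) : (c < size w)%N ->
  local_coef c (lift_gen x) (lift_gen y) = local_coef c x y.
Proof.
move=> hc; rewrite /local_coef /arcU /arcV !letter_rcons //.
have hU : ((c, (letter w c).1.-1).1 <= size w)%N by rewrite ltnW.
have hV : ((c.+1, (letter w c).1).1 <= size w)%N by [].
rewrite !joined_lift // !lab_lift //.
rewrite -[in RHS]forall_proj_node; congr (if _ then _ && _ else if _ then _ && _ else _);
  by apply: eq_forallb => z; rewrite !in_circ_lift // !ffunE.
Qed.

Lemma kh_d_lift_gen (x y : gen b w) : kh_d (lift_gen x) (lift_gen y) = kh_d x y.
Proof.
rewrite !kh_dE !valid_lift_gen; case: (valid x && valid y) => //.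
rewrite [in LHS]size_wl big_nat_recr //= {2}/kh_d_term /= st_lift_state_last.
have -> : ~~ ~~ l.2 && raised_at (lift_state x.1) (lift_state y.1) (size w) = false.
  apply/negbTE/andP => [[last /raised_atP raised]].
  move: (raised (size w)); rewrite size_wl ltnSn eqxx !st_lift_state_last.
  by move: last; case: (l.2) => // _ /(_ isT).
rewrite addr0; apply: eq_big_nat => c /andP[_ hc].
rewrite /kh_d_term local_coef_lift_gen //= st_lift_state_lt //.
have -> : raised_at (lift_state x.1) (lift_state y.1) c = raised_at x.1 y.1 c.
  apply/raised_atP/raised_atP => h t ht.
    by have := h t; rewrite size_wl ltnS (ltnW ht) !st_lift_state_lt // => ->.
  move: ht; rewrite size_wl ltnS leq_eqVlt => /predU1P[-> | ht].
    by rewrite !st_lift_state_last gtn_eqF.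
  by rewrite !st_lift_state_lt // h.
congr (if _ then (_ ^+ _ * _)%R else _).
apply: eq_in_count => t; rewrite mem_iota add0n => /andP[_ ht].
by rewrite st_lift_state_lt // (ltn_trans ht hc).
Qed.

Lemma lifted_of_kh_d_to_lift (x' : gen b wl) y :
  l.2 -> kh_d x' (lift_gen y) != 0%R -> lifted x'.
Proof.
move=> pos /kh_d_neq0[vx _ grow]; apply: lifted_oriented => //.
have := grow (size w); rewrite st_lift_state_last pos.
by case: (st x'.1 (size w)) => // /(_ isT).
Qed.

Lemma lifted_of_kh_d_from_lift x (y' : gen b wl) :
  ~~ l.2 -> kh_d (lift_gen x) y' != 0%R -> lifted y'.
Proof.
move=> neg /kh_d_neq0[_ vy grow]; apply: lifted_oriented => //.
by rewrite neg; apply: grow; rewrite st_lift_state_last.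
Qed.

Lemma sum_lifted (R : nmodType) (F : gen b wl -> R) :
  (forall x', F x' != 0%R -> lifted x') ->
  (\sum_x' F x' = \sum_x F (lift_gen x))%R.
Proof.
move=> supp; rewrite (bigID lifted) /= [X in (_ + X)%R]big1 ?addr0; last first.
  by move=> x' /negbTE nl; apply: contraFeq nl => /supp.
rewrite (reindex_onto lift_gen proj_gen) => [|x' /eqP //].
by apply: eq_bigl => x; rewrite lift_genK lifted_lift_gen eqxx.
Qed.

Variable R : pzRingType.

Definition lift_chain (cf : {ffun gen b w -> R}) : {ffun gen b wl -> R} :=
  [ffun x' => if lifted x' then cf (proj_gen x') else 0%R].

Lemma lift_chain_lift_gen (cf : {ffun gen b w -> R}) x :
  lift_chain cf (lift_gen x) = cf x.
Proof. by rewrite ffunE lifted_lift_gen lift_genK. Qed.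

Lemma support_lift_chain (cf : {ffun gen b w -> R}) (P : pred (gen b w))
    (P' : pred (gen b wl)) :
  (forall x, P' (lift_gen x) = P x) -> (forall x, cf x != 0%R -> P x) ->
  forall x', lift_chain cf x' != 0%R -> P' x'.
Proof.
move=> PP' supp x'; rewrite ffunE; case: (liftedP x') => [[x ->] | _].
  by rewrite lift_genK PP'; apply: supp.
by rewrite eqxx.
Qed.

Lemma kh_dchain_restrict (cf : {ffun gen b wl -> R}) y :
  l.2 -> kh_dchain [ffun x => cf (lift_gen x)] y = kh_dchain cf (lift_gen y).
Proof.
move=> pos; rewrite /kh_dchain [in RHS]sum_lifted.
  by apply: eq_bigr => x _; rewrite ffunE kh_d_lift_gen.
move=> x' nz; apply: (lifted_of_kh_d_to_lift (y := y) pos).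
by apply: contraNneq nz => ->; rewrite mulr0.
Qed.

Lemma kh_dchain_lift_chain (cf : {ffun gen b w -> R}) y' :
  ~~ l.2 ->
  kh_dchain (lift_chain cf) y' =
  if lifted y' then kh_dchain cf (proj_gen y') else 0%R.
Proof.
move=> neg; rewrite /kh_dchain sum_lifted; last first.
  by move=> x'; rewrite ffunE; case: (lifted x'); rewrite ?mul0r ?eqxx.
under eq_bigr => x _ do rewrite lift_chain_lift_gen.
case: (liftedP y') => [[y ->] | nl].
  by apply: eq_bigr => x _; rewrite lift_genK kh_d_lift_gen.
rewrite big1 // => x _; case: (kh_d (lift_gen x) y' =P 0%R) => [-> | /eqP nz].
  by rewrite mulr0.
by case: nl; apply/liftedP; apply: lifted_of_kh_d_from_lift nz.
Qed.

End AppendCrossing.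

Lemma psi_vanishes_rcons_pos b (w : braid_word) (l : nat * bool) :
  l.2 -> psi_vanishes b (rcons w l) -> psi_vanishes b w.
Proof.
move=> pos /psi_vanishesE[cf [supp dcf]]; apply/psi_vanishesE.
exists [ffun x => cf (lift_gen l x)]; split.
  by move=> x; rewrite ffunE => /supp; rewrite valid_lift_gen degree_lift_gen.
move=> y; rewrite kh_dchain_restrict // dcf psi_gen_rcons.
by rewrite (inj_eq (@lift_gen_inj _ _ _)).
Qed.

Lemma psi_vanishes_rcons_neg b (w : braid_word) (l : nat * bool) :
  ~~ l.2 -> psi_vanishes b w -> psi_vanishes b (rcons w l).
Proof.
move=> neg /psi_vanishesE[cf [supp dcf]]; apply/psi_vanishesE.
exists (lift_chain l cf); split.
  by apply: support_lift_chain supp => x; rewrite valid_lift_gen degree_lift_gen.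
move=> y'; rewrite kh_dchain_lift_chain // psi_gen_rcons.
case: (liftedP y') => [[y ->] | nl].
  by rewrite lift_genK dcf (inj_eq (@lift_gen_inj _ _ _)).
by case: eqP => // yE; case: nl; exists (psi_gen b w).
Qed.

Lemma psi'_vanishes_rcons_pos b (w : braid_word) (l : nat * bool) p :
  l.2 -> psi'_vanishes b (rcons w l) p -> psi'_vanishes b w p.
Proof.
move=> pos [cf [supp dcf]]; exists [ffun x => cf (lift_gen l x)]; split.
  move=> x; rewrite ffunE => /supp.
  by rewrite valid_lift_gen degree_lift_gen lab_marked_lift_gen.
move=> y vy my; have := dcf (lift_gen l y).
rewrite valid_lift_gen lab_marked_lift_gen psi'_gen_rcons (inj_eq (@lift_gen_inj _ _ _)).
move=> /(_ vy my) <-; exact: kh_dchain_restrict.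
Qed.

Lemma psi'_vanishes_rcons_neg b (w : braid_word) (l : nat * bool) p :
  ~~ l.2 -> psi'_vanishes b w p -> psi'_vanishes b (rcons w l) p.
Proof.
move=> neg [cf [supp dcf]]; exists (lift_chain l cf); split.
  apply: support_lift_chain supp => x.
  by rewrite valid_lift_gen degree_lift_gen lab_marked_lift_gen.
move=> y' vy my; have := kh_dchain_lift_chain cf y' neg; rewrite /kh_dchain => ->.
rewrite psi'_gen_rcons; case: (liftedP y') => [[y yE] | nl].
  move: vy my; rewrite yE lift_genK.
  rewrite valid_lift_gen lab_marked_lift_gen (inj_eq (@lift_gen_inj _ _ _)).
  exact: dcf.
by case: eqP => // yE; case: nl; exists (psi'_gen b w p).
Qed.

Lemma all_full_twist a i e : all (fun l => l.2 == e) (full_twist a i e).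
Proof. by apply/allP => l /flattenP[s /nseqP[-> _]] /mapP[j _ ->]. Qed.

Lemma twistedS beta a i e m :
  twisted beta a i e m.+1 = twisted beta a i e m ++ full_twist a i e.
Proof.
rewrite /twisted -catA -flatten_rcons; congr (_ ++ flatten _).
by elim: m => //= m ->.
Qed.

Section MonotoneInCrossings.

Variable P : braid_word -> Prop.
Hypothesis P_rcons_pos : forall w (l : nat * bool), l.2 -> P (rcons w l) -> P w.
Hypothesis P_rcons_neg : forall w (l : nat * bool), ~~ l.2 -> P w -> P (rcons w l).

Lemma pos_suffix_reflects w s : all (fun l => l.2 == true) s -> P (w ++ s) -> P w.
Proof.
elim/last_ind: s => [|s l IH]; first by rewrite cats0.
rewrite all_rcons -rcons_cat => /andP[/eqP pos /IH IHs] /(P_rcons_pos pos).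
exact: IHs.
Qed.

Lemma neg_suffix_preserves w s : all (fun l => l.2 == false) s -> P w -> P (w ++ s).
Proof.
elim/last_ind: s => [|s l IH]; first by rewrite cats0.
rewrite all_rcons -rcons_cat => /andP[/eqP/negbT neg /IH IHs] /IHs.
exact: P_rcons_neg.
Qed.

Lemma eventually_stable_twisted beta a i e :
  eventually (fun m => P (twisted beta a i e m) <-> P (twisted beta a i e m.+1)).
Proof.
case: e; [apply: eventually_stable_decr | apply: eventually_stable_incr] => m;
  rewrite twistedS; [apply: pos_suffix_reflects | apply: neg_suffix_preserves];
  exact: all_full_twist.
Qed.

End MonotoneInCrossings.

Theorem theorem1p5 (b a i : nat) (beta : braid_word) (e : bool) :
  (2 <= a)%N -> (a < b)%N -> (1 <= i)%N -> (i <= b - a + 1)%N ->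
  wf_word b beta ->
  exists N : nat, forall m : nat, (N < m)%N ->
    (psi_vanishes b (twisted beta a i e m) <->
     psi_vanishes b (twisted beta a i e m.+1)) /\
    (forall p : nat, (p < b)%N ->
      (psi'_vanishes b (twisted beta a i e m) p <->
       psi'_vanishes b (twisted beta a i e m.+1) p)).
Proof.
move=> _ _ _ _ _; apply: eventually_and.
  apply: (eventually_stable_twisted (@psi_vanishes_rcons_pos b)).
  exact: psi_vanishes_rcons_neg.
apply: eventually_forall_ltn => p _.
apply: (eventually_stable_twisted (P := fun w => psi'_vanishes b w p)) => w l.
  exact: psi'_vanishes_rcons_pos.
exact: psi'_vanishes_rcons_neg.
Qed.
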